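(* Consider the generalized linear model described in the context with a predetermined set of distinct design points $\{\mathbf{x}_1,\ldots,\mathbf{x}_m\}\subset\mathbb{R}^d$, $d\ge1$, and $m>p\ge2$. Then (i) an A-optimal allocation that maximizes $h(\mathbf{w})$, $\mathbf{w}\in S_m$, exists; (ii) the set of A-optimal allocations is convex; and (iii) if $\mathbf{w}_*=(w_1^*,\ldots,w_m^* )^T\in S_m$ satisfies $f(\mathbf{w}_* )>0$, then $\mathbf{w}_*$ is A-optimal among $S_m$ if and only if, for each $i=1,\ldots,m$, $w_i^*$ maximizes $h_i(x)$, $x\in[0,1]$, where $h_i$ is associated with $\mathbf{w}_*$.
   Context: Generalized linear model (GLM): independent responses $Y_i$ from a one-parameter exponential family with $E(Y_i)=\mu_i$ and $\eta_i=g(\mu_i)=\mathbf{q}(\mathbf{x}_i)^T\boldsymbol\beta$, where $g$ is the link function, $\mathbf{q}(\mathbf{x})=(q_1(\mathbf{x}),\ldots,q_p(\mathbf{x}))^T$ are predictor functions, and $\boldsymbol\beta\in\mathbb{R}^p$ is a fixed (assumed) parameter vector. Let $\nu_i=(\partial\mu_i/\partial\eta_i)^2/\mathrm{Var}(Y_i)\ge0$ and $\mathbf{X}=(\mathbf{q}(\mathbf{x}_1),\ldots,\mathbf{q}(\mathbf{x}_m))^T$. Let $S_m=\{\mathbf{w}\in\mathbb{R}^m:w_i\ge0,\sum_iw_i=1\}$, $\mathbf{W}=\mathrm{diag}\{w_1\nu_1,\ldots,w_m\nu_m\}$, $f(\mathbf{w})=|\mathbf{X}^T\mathbf{W}\mathbf{X}|$,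 and $h(\mathbf{w})=[\mathrm{tr}((\mathbf{X}^T\mathbf{W}\mathbf{X})^{-1})]^{-1}$ if $f(\mathbf{w})>0$, $h(\mathbf{w})=0$ otherwise; $\mathbf{w}$ is A-optimal if it maximizes $h$ over $S_m$. For $\mathbf{w}$ and $i$ with $0\le w_i<1$, $h_i(x)=h\big(\tfrac{1-x}{1-w_i}w_1,\ldots,\tfrac{1-x}{1-w_i}w_{i-1},x,\tfrac{1-x}{1-w_i}w_{i+1},\ldots,\tfrac{1-x}{1-w_i}w_m\big)$ for $x\in[0,1]$ (the function $h_i$ ''associated with $\mathbf{w}$''). *)

From HB Require Import structures.
From mathcomp Require Import all_boot all_order all_algebra.
From mathcomp Require Import reals.
Set Implicit Arguments. Unset Strict Implicit. Unset Printing Implicit Defensive.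
Import Order.TTheory GRing.Theory Num.Theory.
Local Open Scope ring_scope.

Section GLM.
Variables (R : realType) (m p : nat).

Definition in_simplex (w : 'I_m -> R) : Prop :=
  (forall i, 0 <= w i) /\ \sum_(i < m) w i = 1.

Definition Wmat (nu w : 'I_m -> R) : 'M[R]_m :=
  diag_mx (\row_i (w i * nu i)).

Definition info_mx (X : 'M[R]_(m, p)) (nu w : 'I_m -> R) : 'M[R]_p :=
  X^T *m Wmat nu w *m X.

Definition fdet (X : 'M[R]_(m, p)) (nu w : 'I_m -> R) : R :=
  \det (info_mx X nu w).

Definition hA (X : 'M[R]_(m, p)) (nu w : 'I_m -> R) : R :=
  if 0 < fdet X nu w then (\tr (invmx (info_mx X nu w)))^-1 else 0.

Definition A_optimal (X : 'M[R]_(m, p)) (nu w : 'I_m -> R) : Prop :=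
  in_simplex w /\ forall w', in_simplex w' -> hA X nu w' <= hA X nu w.

(* h_i associated with w (meaningful when 0 <= w i < 1) *)
Definition h_assoc (X : 'M[R]_(m, p)) (nu w : 'I_m -> R) (i : 'I_m) (x : R) : R :=
  hA X nu (fun j => if j == i then x else (1 - x) / (1 - w i) * w j).

End GLM.

(* h is the lower envelope of linear functions of the weights.  By the
   Cauchy-Schwarz inequality for the trace form (P, Q) |-> tr (P^T M(w') Q),
   every symmetric S with tr S <> 0 gives h(w') <= tr (S S M(w')) / (tr S)^2
   for all w' >= 0, with equality at w for S = M(w)^-1 (or S = v^T v with
   v M(w) = 0 when M(w) is singular).  Hence h is concave, which gives (ii),
   and upper semicontinuous, so it attains its maximum on the compact simplex,
   which gives (i).  For (iii), with A = M(w)^-1 the envelope at w is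
   w' |-> sum_k w'_k d_k where d_k = nu_k x_k A^2 x_k^T / (tr A)^2, so w is
   optimal as soon as every d_k <= h(w); and if d_i > h(w), the
   Sherman-Morrison formula shows that moving a little weight to x_i strictly
   decreases tr M^-1, so w_i does not maximize h_i. *)

From HB Require Import structures.
From mathcomp Require Import all_boot all_order all_algebra.
From mathcomp Require Import reals ring lra.
From mathcomp Require Import boolp classical_sets topology normedtype.
Import Order.TTheory GRing.Theory Num.Theory.
Import numFieldNormedType.Exports.
Local Open Scope classical_set_scope.
Local Open Scope ring_scope.
Set Implicit Arguments. Unset Strict Implicit. Unset Printing Implicit Defensive.

Section PsdMatrix.
Variable R : realFieldType.

Lemma row_sqnorm_ge0 n (v : 'rV[R]_n) : 0 <= (v *m v^T) 0 0.
Proof. by rewrite mxE; apply: sumr_ge0 => j _; rewrite mxE -expr2 sqr_ge0. Qed.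

Lemma row_sqnorm_eq0 n (v : 'rV[R]_n) : ((v *m v^T) 0 0 == 0) = (v == 0).
Proof.
apply/eqP/eqP => [|->]; last by rewrite mul0mx mxE.
have sq_ge0 k : true -> 0 <= v 0 k * v^T k 0 by rewrite mxE -expr2 sqr_ge0.
rewrite mxE => /(psumr_eq0P sq_ge0) v0; apply/rowP => j.
by apply/eqP; rewrite mxE -sqrf_eq0 expr2; have := v0 j isT; rewrite mxE => ->.
Qed.

Definition psdmx n (M : 'M[R]_n) := forall v : 'rV_n, 0 <= (v *m M *m v^T) 0 0.

Lemma psdmx_mxtrace_ge0 n k (M : 'M[R]_n) (P : 'M_(n, k)) :
  psdmx M -> 0 <= \tr (P^T *m M *m P).
Proof.
move=> Mpsd; apply: sumr_ge0 => j _.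
have -> : (P^T *m M *m P) j j = ((col j P)^T *m M *m (col j P)^T^T) 0 0.
  by rewrite trmxK tr_col -row_mul !mxE; apply: eq_bigr => l _; rewrite !mxE.
exact: Mpsd.
Qed.

Lemma quadratic_ge0_discr (a b c : R) :
  0 <= c -> (forall l, 0 <= a - 2 * l * b + l ^+ 2 * c) -> b ^+ 2 <= a * c.
Proof.
move=> c_ge0 q_ge0; have [c0|c_neq0] := eqVneq c 0.
  have [b0|b_neq0] := eqVneq b 0; first by rewrite b0 c0; lra.
  have := q_ge0 ((a + 1) / (2 * b)).
  have -> : a - 2 * ((a + 1) / (2 * b)) * b + ((a + 1) / (2 * b)) ^+ 2 * c = -1.
    by rewrite c0; field; rewrite b_neq0.
  lra.
have c_gt0 : 0 < c by rewrite lt_def c_neq0.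
have := mulr_ge0 (q_ge0 (b / c)) (ltW c_gt0).
have -> : (a - 2 * (b / c) * b + (b / c) ^+ 2 * c) * c = a * c - b ^+ 2 by field.
lra.
Qed.

Lemma mxtrace_cauchy_schwarz n (M P Q : 'M[R]_n) : M^T = M -> psdmx M ->
  \tr (P^T *m M *m Q) ^+ 2 <= \tr (P^T *m M *m P) * \tr (Q^T *m M *m Q).
Proof.
move=> Msym Mpsd; apply: quadratic_ge0_discr; first exact: psdmx_mxtrace_ge0.
move=> l; have := psdmx_mxtrace_ge0 (P - l *: Q) Mpsd.
have sym : \tr (Q^T *m M *m P) = \tr (P^T *m M *m Q).
  by rewrite -mxtrace_tr !trmx_mul trmxK Msym mulmxA.
have -> : (P - l *: Q)^T = P^T - l *: Q^T by rewrite linearB linearZ.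
rewrite !mulmxBl !mulmxBr -!scalemxAl -!scalemxAr ?mulmxBl -?scalemxAl.
rewrite !raddfB /= !mxtraceZ sym; congr (0 <= _); ring.
Qed.

Lemma psdmx_mxtrace_invmx_gt0 n (M : 'M[R]_n) : (0 < n)%N -> M^T = M -> psdmx M ->
  M \in unitmx -> 0 < \tr (invmx M).
Proof.
move=> n_gt0 Msym Mpsd Munit; set A := invmx M.
have Asym : A^T = A by rewrite trmx_inv Msym.
have AM1 : A^T *m M = 1%:M by rewrite Asym mulVmx.
have := mxtrace_cauchy_schwarz A 1%:M Msym Mpsd.
rewrite AM1 trmx1 !mul1mx mulmx1 mxtrace1 => cs.
have trA_ge0 : 0 <= \tr A.
  by have := psdmx_mxtrace_ge0 A Mpsd; rewrite AM1 mul1mx.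
have trM_ge0 : 0 <= \tr M.
  by have := psdmx_mxtrace_ge0 1%:M Mpsd; rewrite trmx1 mulmx1 mul1mx.
have : 0 < (n%:R : R) by rewrite ltr0n.
nra.
Qed.

Lemma psdmx_invmx n (M : 'M[R]_n) : M^T = M -> psdmx M -> M \in unitmx ->
  psdmx (invmx M).
Proof.
move=> Msym Mpsd Munit v; have := Mpsd (v *m invmx M).
by rewrite trmx_mul trmx_inv Msym -!mulmxA mulKmx.
Qed.

End PsdMatrix.

(* If det M < 0, the intermediate value theorem makes M + t (1 - M) singular
   for some t in [0, 1], and a kernel vector contradicts positivity. *)
Lemma psdmx_det_ge0 (R : rcfType) n (M : 'M[R]_n) : psdmx M -> 0 <= \det M.
Proof.
move=> Mpsd; rewrite leNgt; apply/negP => det_lt0.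
pose N : 'M[{poly R}]_n := map_mx polyC M + 'X *: map_mx polyC (1%:M - M).
have hornerN t : (\det N).[t] = \det (M + t *: (1%:M - M)).
  rewrite -horner_evalE -det_map_mx; congr (\det _); apply/matrixP => i j.
  by rewrite !mxE /= horner_evalE !hornerE.
have [|t /andP[t0 t1]] := @poly_ivt R (\det N) 0 1 ler01.
  by rewrite !hornerN scale0r addr0 scale1r addrC subrK det1 (ltW det_lt0) ler01.
rewrite /root hornerN => /det0P[v v_neq0 vN0].
have eq0 : (v *m M *m v^T) 0 0 + t * ((v *m v^T) 0 0 - (v *m M *m v^T) 0 0) = 0.
  have := congr1 (fun B : 'rV_n => (B *m v^T) 0 0) vN0.
  by rewrite mul0mx mulmxDr -scalemxAr mulmxBr mulmx1 mulmxDl -scalemxAl mulmxBl !mxE.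
have q_ge0 := Mpsd v; have nv_gt0 : 0 < (v *m v^T) 0 0.
  by rewrite lt_def row_sqnorm_eq0 v_neq0 row_sqnorm_ge0.
have [t_eq0|t_neq0] := eqVneq t 0.
  move: vN0; rewrite t_eq0 scale0r addr0 => vM0.
  have /eqP detM0 : \det M == 0 by apply/det0P; exists v.
  by move: det_lt0; rewrite detM0 ltxx.
have t_gt0 : 0 < t by rewrite lt_def t_neq0.
nra.
Qed.

Lemma sherman_morrison (F : fieldType) n (M : 'M[F]_n) (u : 'rV_n) (c a : F) :
  M \in unitmx -> c != 0 -> c + a * (u *m invmx M *m u^T) 0 0 != 0 ->
  let A := invmx M in
  let K := c^-1 *: (A - (a / (c + a * (u *m A *m u^T) 0 0)) *: (A *m u^T *m u *m A)) in
  c *: M + a *: (u^T *m u) \in unitmx /\ invmx (c *: M + a *: (u^T *m u)) = K.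
Proof.
move=> Munit c_neq0 d_neq0 A K.
set g := (u *m A *m u^T) 0 0 in d_neq0 *; set N := c *: M + a *: (u^T *m u).
have uAu : u *m A *m u^T = g%:M by rewrite [LHS]mx11_scalar.
have NK : N *m K = 1%:M.
  rewrite /N /K -scalemxAr mulmxDl -!scalemxAl !mulmxBr -!scalemxAr !mulmxA.
  have -> : u^T *m u *m A *m u^T *m u *m A = u^T *m (u *m A *m u^T) *m u *m A.
    by rewrite !mulmxA.
  rewrite mulmxV // !mul1mx uAu mul_mx_scalar -!scalemxAl.
  by apply/matrixP => i j; rewrite !mxE eqxx mulr1n; field; apply/andP.
have [Nunit _] := mulmx1_unit NK.
by split=> //; rewrite -[invmx N]mulmx1 -NK mulmxA mulVmx // mul1mx.
Qed.

(* With phi = tr M^-1, g = u M^-1 u^T and b = u M^-2 u^T, the left-hand side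
   is tr (c M + a u^T u)^-1 by Sherman-Morrison: the trace after moving the
   weight of a design point from v to y (see info_mx_shift_weight). *)
Lemma shifted_trace_lt (R : realFieldType) (phi nu g b v : R) :
  let c y := (1 - y) / (1 - v) in let a y := nu * (y - v) / (1 - v) in
  0 < phi -> 0 <= nu -> 0 <= g -> phi < nu * b -> v < 1 ->
  exists2 y, v < y < 1 & (c y)^-1 * (phi - a y / (c y + a y * g) * b) < phi.
Proof.
move=> c a phi_gt0 nu_ge0 g_ge0 phi_lt v_lt1; set r := 1 - v.
have r_gt0 : 0 < r by rewrite subr_gt0.
have nug_ge0 : 0 <= nu * g by exact: mulr_ge0.
have den_gt0 : 0 < nu * b + phi * (nu * g) by nra.
(* Moving e < r decreases the trace iff phi * D < r * nu * b, with D below;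
   for this e the gap r * nu * b - phi * D is e * (phi + nu * b). *)
set e := r * (nu * b - phi) / (nu * b + phi * (nu * g)).
have e_gt0 : 0 < e by rewrite /e divr_gt0 // mulr_gt0 // subr_gt0.
have eden : e * (nu * b + phi * (nu * g)) = r * (nu * b - phi).
  by rewrite /e; field; rewrite lt0r_neq0.
have e_lt_r : e < r.
  rewrite -(ltr_pM2r den_gt0) eden ltr_pM2l //.
  by have := mulr_ge0 (ltW phi_gt0) nug_ge0; lra.
exists (v + e); first by rewrite /r in e_lt_r; apply/andP; split; lra.
set D := r - e + e * (nu * g).
have D_gt0 : 0 < D by rewrite /D; nra.
have -> : (c (v + e))^-1 * (phi - a (v + e) / (c (v + e) + a (v + e) * g) * b) =
    r * (phi * D - e * (nu * b)) / ((r - e) * D).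
  rewrite /c /a /D /r /=; field.
  by rewrite !lt0r_neq0 // ?subr_gt0 //; rewrite /r in e_lt_r *; nra.
rewrite ltr_pdivrMr ?mulr_gt0 ?subr_gt0 // -subr_gt0.
have -> : phi * ((r - e) * D) - r * (phi * D - e * (nu * b)) =
    e * e * (phi + nu * b) + e * (r * (nu * b - phi) - e * (nu * b + phi * (nu * g))).
  by rewrite /D; ring.
by rewrite -eden subrr mulr0 addr0; apply: mulr_gt0; [exact: mulr_gt0 | lra].
Qed.

Lemma seq_argmax (T : eqType) (R : realDomainType) (F : T -> R) (s : seq T) x0 :
  x0 \in s -> exists2 x, x \in s & forall z, z \in s -> F z <= F x.
Proof.
elim: s x0 => [//|a [|b s] IH] x0 _.
  by exists a => [|z]; rewrite ?mem_head // inE => /eqP ->.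
have [x xs x_max] := IH b (mem_head b s).
have [Fax|Fxa] := leP (F a) (F x).
  exists x => [|z]; first by rewrite inE xs orbT.
  by rewrite inE => /predU1P[->|/x_max].
exists a => [|z]; first exact: mem_head.
by rewrite inE => /predU1P[->//|/x_max Fzx]; apply: le_trans Fzx (ltW Fxa).
Qed.

Lemma compact_argmax_inf_continuous (T : ptopologicalType) (R : realType)
    (K : set T) (f : T -> R) :
  compact K -> K !=set0 ->
  (forall x, K x -> exists2 g : T -> R,
    continuous g & g x = f x /\ forall z, K z -> f z <= g z) ->
  exists2 x, K x & forall z, K z -> f z <= f x.
Proof.
(* Otherwise each x is beaten by some y x; the best of the finitely many y x
   needed to cover K by the open sets [g x < f (y x)] would beat itself. *)
move=> K_compact [x0 Kx0] f_inf.
have [//|no_max] := pselect (exists2 x, K x & forall z, K z -> f z <= f x).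
have /choice[y y_better] : forall x, exists y, K x -> K y /\ f x < f y.
  move=> x; have [Kx|] := pselect (K x); last by exists x.
  apply: contrapT => /forallNP y_worse; apply: no_max; exists x => // z Kz.
  by rewrite leNgt; apply/negP => fxz; apply: (y_worse z).
have /choice[g g_maj] : forall x, exists g : T -> R,
    K x -> [/\ continuous g, g x = f x & forall z, K z -> f z <= g z].
  move=> x; have [Kx|] := pselect (K x); last by exists f.
  by have [g gc [gx g_ge]] := f_inf x Kx; exists g.
pose U x := g x @^-1` [set z | z < f (y x)].
move: K_compact; rewrite compact_cover => /(_ T K U)[].
- move=> x Kx; have [gc _ _] := g_maj x Kx.
  by apply: open_comp; [move=> z _; exact: gc | exact: open_lt].
- move=> x Kx; exists x => //; have [_ gx _] := g_maj x Kx.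
  by rewrite /U /= gx; exact: (y_better x Kx).2.
move=> D DK K_cover; have [x1 x1D _] := K_cover x0 Kx0.
have [xm xmD xm_max] := seq_argmax (fun x => f (y x)) x1D.
have Kxm : K xm by have := DK xm xmD; rewrite inE.
have [x xD Uxm] := K_cover (y xm) (y_better xm Kxm).1.
have Kx : K x by have := DK x xD; rewrite inE.
have [_ _ g_ge] := g_maj x Kx.
have := g_ge (y xm) (y_better xm Kxm).1; have := xm_max x xD; rewrite /U /= in Uxm.
lra.
Qed.

Lemma continuous_sum (T : topologicalType) (R : numFieldType) (I : Type) (s : seq I)
    (F : I -> T -> R) :
  (forall i, continuous (F i)) -> continuous (fun x => \sum_(i <- s) F i x).
Proof.
move=> Fc x; elim: s => [|i s IH].
  under eq_fun do rewrite big_nil; exact: cst_continuous.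
under eq_fun do rewrite big_cons.
exact: (@continuousD _ _ _ (F i) (fun x => \sum_(j <- s) F j x) _ (Fc i x) IH).
Qed.

Lemma compact_simplex (R : realType) m :
  compact [set r : 'rV[R]_m | in_simplex (fun k => r 0 k)].
Proof.
apply: bounded_closed_compact.
  exists 1; split; first by rewrite num_real.
  move=> M M_gt1 r [r_ge0 r_sum]; rewrite /Num.Def.normr /= mx_normrE.
  apply: bigmax_le => [|[i k] _ /=]; first lra.
  rewrite ord1 ger0_norm //; apply: le_trans (ltW M_gt1).
  have : 0 <= \sum_(j | j != k) r 0 j by exact: sumr_ge0.
  by move: r_sum; rewrite (bigD1 k) //=; lra.
have -> : [set r : 'rV[R]_m | in_simplex (fun k => r 0 k)] =
    \bigcap_k [set r | 0 <= r 0 k] `&` [set r | \sum_k r 0 k = 1].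
  by apply/seteqP; split=> r [r_ge0 r_sum]; split=> // k; [move=> _|]; exact: r_ge0.
apply: closedI.
  apply: closed_bigI => k _; apply: preimage_closed (@closed_ge _ 0) => r _.
  exact: coord_continuous.
apply: preimage_closed (@closed_eq _ 1) => r _.
by apply: continuous_sum => k; exact: coord_continuous.
Qed.

Lemma continuous_row_dot (R : realType) m (c : 'I_m -> R) :
  continuous (fun r : 'rV[R]_m => \sum_k r 0 k * c k).
Proof.
apply: continuous_sum => k r.
by apply: (@continuousM R); [exact: coord_continuous | exact: cst_continuous].
Qed.

Lemma in_simplex_comb (R : realType) m (w1 w2 : 'I_m -> R) t :
  in_simplex w1 -> in_simplex w2 -> 0 <= t <= 1 ->
  in_simplex (fun k => t * w1 k + (1 - t) * w2 k).
Proof.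
move=> [w1_ge0 w1_sum] [w2_ge0 w2_sum] /andP[t_ge0 t_le1]; split.
  by move=> k; rewrite addr_ge0 // mulr_ge0 // subr_ge0.
by rewrite big_split /= -!mulr_sumr w1_sum w2_sum !mulr1 subrKC.
Qed.

Lemma in_simplex_vertex (R : realType) m (w : 'I_m -> R) k :
  in_simplex w -> w k = 1 -> forall j, j != k -> w j = 0.
Proof.
move=> [w_ge0 w_sum] wk1; have /psumr_eq0P rest0 : \sum_(j | j != k) w j = 0.
  by move: w_sum; rewrite (bigD1 k) //= wk1; lra.
by move=> j jk; apply: rest0 => // l _; exact: w_ge0.
Qed.

Section InformationMatrix.
Variables (R : realType) (m p : nat) (X : 'M[R]_(m, p)) (nu : 'I_m -> R).
Hypotheses (nu_ge0 : forall k, 0 <= nu k) (p_gt0 : (0 < p)%N).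

Local Notation M := (info_mx X nu).
Local Notation h := (hA X nu).

Definition nonneg (w : 'I_m -> R) := forall k, 0 <= w k.

Lemma info_mx_sum w : M w = \sum_k (w k * nu k) *: ((row k X)^T *m row k X).
Proof.
apply/matrixP => a b; rewrite /info_mx /Wmat mul_mx_diag !mxE summxE.
by apply: eq_bigr => k _; rewrite !mxE big_ord1 !mxE; ring.
Qed.

Lemma mxtrace_mul_info_mx (C : 'M_p) w :
  \tr (C *m M w) = \sum_k w k * (nu k * (row k X *m C *m (row k X)^T) 0 0).
Proof.
rewrite info_mx_sum mulmx_sumr raddf_sum /=; apply: eq_bigr => k _.
by rewrite -scalemxAr mxtraceZ mulmxA mxtrace_mulC mulmxA trace_mx11 mulrA.
Qed.

Lemma trmx_info_mx w : (M w)^T = M w.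
Proof. by rewrite /info_mx !trmx_mul trmxK /Wmat tr_diag_mx mulmxA. Qed.

Lemma psdmx_info_mx w : nonneg w -> psdmx (M w).
Proof.
move=> w_ge0 v; rewrite -trace_mx11 mxtrace_mulC mulmxA mxtrace_mul_info_mx.
apply: sumr_ge0 => k _; rewrite !mulr_ge0 //.
have -> : row k X *m (v^T *m v) *m (row k X)^T = (row k X *m v^T) *m (row k X *m v^T)^T.
  by rewrite trmx_mul trmxK !mulmxA.
exact: row_sqnorm_ge0.
Qed.

Lemma info_mx_unitmx w : nonneg w -> (M w \in unitmx) = (0 < \det (M w)).
Proof.
move=> w_ge0; rewrite unitmxE unitfE lt_def.
by rewrite psdmx_det_ge0 ?andbT //; exact: psdmx_info_mx.
Qed.

Lemma hA_invmx w : 0 < \det (M w) -> h w = (\tr (invmx (M w)))^-1.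
Proof. by rewrite /hA /fdet => ->. Qed.

Lemma mxtrace_invmx_info_mx_gt0 w : nonneg w -> 0 < \det (M w) -> 0 < \tr (invmx (M w)).
Proof.
move=> w_ge0 det_gt0; apply: psdmx_mxtrace_invmx_gt0 => //.
- exact: trmx_info_mx.
- exact: psdmx_info_mx.
- by rewrite info_mx_unitmx.
Qed.

Definition tangent (S : 'M_p) w := \tr (S *m S *m M w) / \tr S ^+ 2.

Definition tangent_coef (S : 'M_p) k :=
  nu k * (row k X *m (S *m S) *m (row k X)^T) 0 0 / \tr S ^+ 2.

Lemma tangentE S w : tangent S w = \sum_k w k * tangent_coef S k.
Proof.
rewrite /tangent mxtrace_mul_info_mx mulr_suml.
by apply: eq_bigr => k _; rewrite /tangent_coef !mulrA.
Qed.

Lemma hA_le_tangent S w : S^T = S -> \tr S != 0 -> nonneg w -> h w <= tangent S w.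
Proof.
move=> Ssym trS_neq0 w_ge0; rewrite /tangent.
have trS2_gt0 : 0 < \tr S ^+ 2 by rewrite exprn_even_gt0.
have SMS : \tr (S *m S *m M w) = \tr (S^T *m M w *m S).
  by rewrite Ssym -mulmxA mxtrace_mulC.
rewrite /hA /fdet; case: ifPn => [det_gt0|_]; last first.
  apply: divr_ge0 (ltW trS2_gt0); rewrite SMS.
  exact/psdmx_mxtrace_ge0/psdmx_info_mx.
set B := invmx (M w).
have Bsym : B^T = B by rewrite trmx_inv trmx_info_mx.
have BM : B^T *m M w = 1%:M by rewrite Bsym mulVmx ?info_mx_unitmx.
(* Cauchy-Schwarz with P := M(w)^-1: (tr S)^2 <= tr M(w)^-1 * tr (S S M(w)). *)
have := mxtrace_cauchy_schwarz B S (trmx_info_mx w) (psdmx_info_mx w_ge0).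
rewrite BM !mul1mx -SMS => cs.
have trB_gt0 : 0 < \tr B by exact: mxtrace_invmx_info_mx_gt0.
by rewrite ler_pdivlMr // ler_pdivrMl.
Qed.

Lemma tangent_invmx w : nonneg w -> 0 < \det (M w) -> tangent (invmx (M w)) w = h w.
Proof.
move=> w_ge0 det_gt0; have trA_gt0 := mxtrace_invmx_info_mx_gt0 w_ge0 det_gt0.
rewrite /tangent hA_invmx // -mulmxA mulVmx ?info_mx_unitmx // mulmx1.
by field; rewrite lt0r_neq0.
Qed.

Lemma hA_tangent_supported w : nonneg w ->
  exists2 S : 'M_p, S^T = S /\ \tr S != 0 & tangent S w = h w.
Proof.
move=> w_ge0; have [det_gt0|det_le0] := ltP 0 (\det (M w)).
  exists (invmx (M w)); last exact: tangent_invmx.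
  split; first by rewrite trmx_inv trmx_info_mx.
  by rewrite lt0r_neq0 // mxtrace_invmx_info_mx_gt0.
have /det0P[v v_neq0 vM0] : \det (M w) == 0.
  by rewrite eq_le det_le0 psdmx_det_ge0 //; exact: psdmx_info_mx.
exists (v^T *m v).
  split; first by rewrite trmx_mul trmxK.
  by rewrite mxtrace_mulC trace_mx11 row_sqnorm_eq0.
rewrite /tangent /hA /fdet ltNge det_le0 /=.
by rewrite -!mulmxA vM0 !mulmx0 linear0 mul0r.
Qed.

Lemma hA_concave w1 w2 t : nonneg w1 -> nonneg w2 -> 0 <= t <= 1 ->
  t * h w1 + (1 - t) * h w2 <= h (fun k => t * w1 k + (1 - t) * w2 k).
Proof.
move=> w1_ge0 w2_ge0 /andP[t_ge0 t_le1].
have wt_ge0 : nonneg (fun k => t * w1 k + (1 - t) * w2 k).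
  by move=> k; rewrite addr_ge0 // mulr_ge0 // subr_ge0.
have [S [Ssym trS_neq0] <-] := hA_tangent_supported wt_ge0.
have -> : tangent S (fun k => t * w1 k + (1 - t) * w2 k) =
    t * tangent S w1 + (1 - t) * tangent S w2.
  rewrite !tangentE !mulr_sumr -big_split /=.
  by apply: eq_bigr => k _; rewrite mulrDl !mulrA.
by apply: lerD; apply: ler_wpM2l; rewrite ?subr_ge0 //; exact: hA_le_tangent.
Qed.

Lemma A_optimal_comb w1 w2 t : A_optimal X nu w1 -> A_optimal X nu w2 -> 0 <= t <= 1 ->
  A_optimal X nu (fun k => t * w1 k + (1 - t) * w2 k).
Proof.
move=> [w1_simplex w1_opt] [w2_simplex w2_opt] t01; split.
  exact: in_simplex_comb.
move=> w' w'_simplex; apply: le_trans (hA_concave w1_simplex.1 w2_simplex.1 t01).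
have /andP[t_ge0 t_le1] := t01; have t'_ge0 : 0 <= 1 - t by rewrite subr_ge0.
have -> : h w' = t * h w' + (1 - t) * h w' by ring.
by apply: lerD; apply: ler_wpM2l => //; [exact: w1_opt | exact: w2_opt].
Qed.

(* [h_assoc X nu w i y] is [hA X nu (shift_weight w i y)] by definition. *)
Definition shift_weight (w : 'I_m -> R) i y : 'I_m -> R :=
  fun j => if j == i then y else (1 - y) / (1 - w i) * w j.

Lemma shift_weight_simplex w i y : in_simplex w -> w i < 1 -> 0 <= y <= 1 ->
  in_simplex (shift_weight w i y).
Proof.
move=> [w_ge0 w_sum] wi_lt1 /andP[y_ge0 y_le1]; split.
  move=> j; rewrite /shift_weight; case: eqP => // _.
  by rewrite mulr_ge0 // divr_ge0 // subr_ge0 // ltW.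
have rest : \sum_(j | j != i) w j = 1 - w i by move: w_sum; rewrite (bigD1 i) //=; lra.
rewrite (bigD1 i) //= /shift_weight eqxx.
rewrite (eq_bigr (fun j => (1 - y) / (1 - w i) * w j)); last by move=> j /negbTE ->.
by rewrite -mulr_sumr rest divfK ?subrKC // subr_eq0 eq_sym lt_eqF.
Qed.

Lemma shift_weight_id w i : w i != 1 -> shift_weight w i (w i) = w.
Proof.
move=> wi_neq1; apply/funext => j; rewrite /shift_weight.
by case: eqP => [->|_] //; rewrite divff ?mul1r // subr_eq0 eq_sym.
Qed.

Lemma info_mx_shift_weight w i y : w i != 1 ->
  M (shift_weight w i y) = ((1 - y) / (1 - w i)) *: M w +
    (nu i * (y - w i) / (1 - w i)) *: ((row i X)^T *m row i X).
Proof.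
move=> wi_neq1; have r_neq0 : 1 - w i != 0 by rewrite subr_eq0 eq_sym.
rewrite !info_mx_sum (bigD1 i) //= [in RHS](bigD1 i) //= scalerDr addrAC.
congr (_ + _).
  by rewrite scalerA -scalerDl /shift_weight eqxx; congr (_ *: _); field.
rewrite scaler_sumr; apply: eq_bigr => j /negbTE ji.
by rewrite /shift_weight ji scalerA mulrA.
Qed.

Lemma hA_shift_weight_gt w i : in_simplex w -> 0 < \det (M w) -> w i < 1 ->
  h w < tangent_coef (invmx (M w)) i ->
  exists2 y, 0 <= y <= 1 & h w < h (shift_weight w i y).
Proof.
move=> w_simplex det_gt0 wi_lt1; have w_ge0 := w_simplex.1.
set A := invmx (M w); set u := row i X.
have Munit : M w \in unitmx by rewrite info_mx_unitmx.
have phi_gt0 : 0 < \tr A by exact: mxtrace_invmx_info_mx_gt0.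
have g_ge0 : 0 <= (u *m A *m u^T) 0 0.
  exact: psdmx_invmx (trmx_info_mx w) (psdmx_info_mx w_ge0) Munit u.
rewrite hA_invmx // /tangent_coef -/A -/u ltr_pdivlMr ?exprn_gt0 //.
rewrite expr2 mulKf ?lt0r_neq0 // => phi_lt.
have [y /andP[wi_lt_y y_lt1] /= trK_lt] :=
  shifted_trace_lt phi_gt0 (nu_ge0 i) g_ge0 phi_lt wi_lt1.
have y01 : 0 <= y <= 1 by apply/andP; split; [have := w_ge0 i|]; lra.
exists y => //.
set c := (1 - y) / (1 - w i); set a := nu i * (y - w i) / (1 - w i).
have c_gt0 : 0 < c by rewrite divr_gt0 // subr_gt0.
have a_ge0 : 0 <= a by rewrite divr_ge0 ?mulr_ge0 // subr_ge0 ltW.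
have [|Nunit Ninv] := sherman_morrison (u := u) (a := a) Munit (lt0r_neq0 c_gt0).
  by rewrite lt0r_neq0 // ltr_wpDr // mulr_ge0.
have shift_simplex := shift_weight_simplex w_simplex wi_lt1 y01.
have shift_det_gt0 : 0 < \det (M (shift_weight w i y)).
  by rewrite -info_mx_unitmx ?info_mx_shift_weight ?lt_eqF //; case: shift_simplex.
have := mxtrace_invmx_info_mx_gt0 shift_simplex.1 shift_det_gt0.
rewrite hA_invmx // info_mx_shift_weight ?lt_eqF // Ninv -/A => trK_gt0.
have trAuuA : \tr (A *m u^T *m u *m A) = (u *m (A *m A) *m u^T) 0 0.
  by rewrite -mulmxA mxtrace_mulC trace_mx11 !mulmxA.
by rewrite ltf_pV2 // mxtraceZ raddfB /= mxtraceZ trAuuA.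
Qed.

Lemma tangent_coef_le_hA w : in_simplex w -> 0 < \det (M w) ->
  (forall i, w i < 1 -> forall y, 0 <= y <= 1 ->
     h_assoc X nu w i y <= h_assoc X nu w i (w i)) ->
  forall k, tangent_coef (invmx (M w)) k <= h w.
Proof.
move=> w_simplex det_gt0 w_loc k; have [wk_lt1|wk_ge1] := ltP (w k) 1.
  rewrite leNgt; apply/negP => /(hA_shift_weight_gt w_simplex det_gt0 wk_lt1)[y y01].
  have : h (shift_weight w k y) <= h (shift_weight w k (w k)) := w_loc k wk_lt1 y y01.
  by rewrite shift_weight_id ?lt_eqF // leNgt => /negP.
have wk1 : w k = 1.
  apply/eqP; rewrite eq_le wk_ge1 andbT.
  by case: w_simplex => w_ge0 <-; rewrite (bigD1 k) //= lerDl sumr_ge0.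
rewrite -(tangent_invmx w_simplex.1 det_gt0) tangentE (bigD1 k) //= wk1 mul1r.
rewrite big1 ?addr0 // => j jk.
by rewrite (in_simplex_vertex w_simplex wk1 jk) mul0r.
Qed.

Lemma A_optimal_tangent_coef w : in_simplex w -> 0 < \det (M w) ->
  (forall k, tangent_coef (invmx (M w)) k <= h w) -> A_optimal X nu w.
Proof.
move=> w_simplex det_gt0 coef_le; split=> // w' [w'_ge0 w'_sum].
have trA_gt0 := mxtrace_invmx_info_mx_gt0 w_simplex.1 det_gt0.
have Asym : (invmx (M w))^T = invmx (M w) by rewrite trmx_inv trmx_info_mx.
apply: le_trans (hA_le_tangent Asym (lt0r_neq0 trA_gt0) w'_ge0) _.
rewrite tangentE; apply: le_trans (_ : \sum_k w' k * h w <= _).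
  by apply: ler_sum => k _; apply: ler_wpM2l.
by rewrite -mulr_suml w'_sum mul1r.
Qed.

Lemma A_optimal_iff_h_assoc w : in_simplex w -> 0 < fdet X nu w ->
  A_optimal X nu w <->
  (forall i, w i < 1 -> forall y, 0 <= y <= 1 ->
     h_assoc X nu w i y <= h_assoc X nu w i (w i)).
Proof.
move=> w_simplex det_gt0; split=> [[_ w_opt] i wi_lt1 y y01|w_loc].
  change (h (shift_weight w i y) <= h (shift_weight w i (w i))).
  by rewrite shift_weight_id ?lt_eqF //; apply/w_opt/shift_weight_simplex.
by apply: A_optimal_tangent_coef => //; exact: tangent_coef_le_hA.
Qed.

End InformationMatrix.

Lemma A_optimal_exists (R : realType) m p (X : 'M[R]_(m, p)) (nu : 'I_m -> R) :
  (forall k, 0 <= nu k) -> (0 < p)%N -> (0 < m)%N -> exists w, A_optimal X nu w.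
Proof.
move=> nu_ge0 p_gt0 m_gt0; pose row_weight (r : 'rV[R]_m) k := r 0 k.
have [r r_simplex r_max] : exists2 r : 'rV[R]_m, in_simplex (row_weight r) &
    forall z, in_simplex (row_weight z) ->
      hA X nu (row_weight z) <= hA X nu (row_weight r).
  apply: compact_argmax_inf_continuous; first exact: compact_simplex.
    exists (const_mx m%:R^-1); split=> [k|]; rewrite /row_weight.
      by rewrite mxE invr_ge0 ler0n.
    under eq_bigr do rewrite mxE.
    by rewrite sumr_const card_ord -[_ *+ m]mulr_natr mulVf // pnatr_eq0 -lt0n.
  move=> r [r_ge0 _].
  have [S [Ssym trS_neq0] tS] := hA_tangent_supported X nu_ge0 p_gt0 r_ge0.
  exists (fun z => tangent X nu S (row_weight z)).
    under eq_fun do rewrite tangentE; exact: continuous_row_dot.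
  by split=> // z [z_ge0 _]; exact: hA_le_tangent.
exists (row_weight r); split=> // w w_simplex.
have -> : w = row_weight (\row_k w k) by apply/funext => k; rewrite /row_weight mxE.
by apply: r_max; rewrite /row_weight; under eq_fun do rewrite mxE.
Qed.

Theorem theorem3 (R : realType) (d m p : nat) (x : 'I_m -> 'rV[R]_d)
    (q : 'rV[R]_d -> 'rV[R]_p) (nu : 'I_m -> R) :
  (1 <= d)%N -> (2 <= p)%N -> (p < m)%N ->
  injective x ->
  (forall i, 0 <= nu i) ->
  let X : 'M[R]_(m, p) := \matrix_(i < m, j < p) q (x i) 0 j in
  (* (i) existence *)
  (exists w, A_optimal X nu w) /\
  (* (ii) convexity *)
  (forall w1 w2 (t : R), A_optimal X nu w1 -> A_optimal X nu w2 ->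
     0 <= t <= 1 -> A_optimal X nu (fun i => t * w1 i + (1 - t) * w2 i)) /\
  (* (iii) characterization *)
  (forall w, in_simplex w -> 0 < fdet X nu w ->
     (A_optimal X nu w <->
      (forall i, w i < 1 ->
         forall y, 0 <= y <= 1 -> h_assoc X nu w i y <= h_assoc X nu w i (w i)))).
Proof.
move=> _ p_ge2 p_lt_m _ nu_ge0 X.
have p_gt0 : (0 < p)%N by apply: leq_trans p_ge2.
have m_gt0 : (0 < m)%N by apply: leq_ltn_trans p_lt_m.
split; first exact: A_optimal_exists.
split; first by move=> w1 w2 t; exact: A_optimal_comb.
by move=> w; exact: A_optimal_iff_h_assoc.
Qed.
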